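(* Assume $l>1$. For every partition $\mu$ and every $i\in\mathbb{Z}/l\mathbb{Z}$ one has $\mathfrak{d}(\sigma_i*\mu)=\sigma_i*\mathfrak{d}(\mu)$. That is, the map $\mathfrak{d}:\mathcal{P}\to\mathbb{Z}^l$ is $\tilde S_l$-equivariant. The same holds for its restriction $\mathfrak{d}:\heartsuit(l)\to\mathbb{Z}_{\heartsuit}$ to $l$-cores.
   Context: Partitions are identified with Young diagrams $\mathbb{Y}(\mu)=\{(i,j):1\le j\le\mu_i\}$ (English convention). The content of a cell $(i,j)$ is $c(i,j)=j-i$. For a partition $\lambda$ let $N_i(\lambda)$ ($i\in\{0,\dots,l-1\}$) be the number of cells of $\lambda$ of content $\equiv i \pmod l$, and put $\mathfrak{d}(\lambda)=\mathbf{d}_\lambda=(N_0(\lambda),\dots,N_{l-1}(\lambda))$. Let $\mathcal{P}$ be the set of all partitions and $\heartsuit(l)$ the set of $l$-cores (partitions from which no rim-hook of $l$ cells can be removed). Let $\mathbb{Z}_\heartsuit=\{\mathbf{d}_\nu:\nu\in\heartsuit(l)\}$. The affine symmetric group $\tilde S_l$ has Coxeter generators $\sigma_0,\dots,\sigma_{l-1}$ (indices mod $l$) with relations $\sigma_i^2=1$ and $\sigma_i\sigma_{i+1}\sigma_i=\sigma_{i+1}\sigma_i\sigma_{i+1}$. It acts on $\mathcal{P}$ by $\sigma_i*\mu=\mathbf{T}_i(\mu)$. Here $\mathbb{Y}(\mathbf{T}_i(\mu))$ is obtained from $\mathbb{Y}(\mu)$ by adding all addable cells of content $\equiv i\pmod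 l$ and removing all removable cells of content $\equiv i \pmod l$ (a cell is removable if deleting it leaves a Young diagram, and addable if it is not in the diagram and adding it gives a Young diagram). It acts on $\mathbb{Z}^l$ by $\sigma_i*\mathbf{d}=\mathbf{d}'$, where $d'_j=d_j$ for $j\ne i$, $d'_i=d_{i+1}+d_{i-1}-d_i$ if $i\neq0$, and $d'_0=d_1+d_{l-1}-d_0+1$. *)

From mathcomp Require Import all_boot all_order all_algebra.
Set Implicit Arguments. Unset Strict Implicit. Unset Printing Implicit Defensive.
Import Order.TTheory GRing.Theory Num.Theory.

Definition is_partition (lam : seq nat) : bool :=
  sorted (fun a b => b <= a)%N lam && all (fun k => 0 < k)%N lam.

(* Cells are pairs (row, column), 1-indexed, English convention. *)
Definition cell := (nat * nat)%type.

Definition in_diag (lam : seq nat) (x : cell) : bool :=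
  (0 < x.1 <= size lam)%N && (0 < x.2 <= nth 0 lam x.1.-1)%N.

Definition young (P : cell -> bool) : Prop :=
  exists lam, is_partition lam /\ forall x, P x = in_diag lam x.

Definition removable (lam : seq nat) (x : cell) : Prop :=
  in_diag lam x /\ young (fun y => in_diag lam y && (y != x)).

Definition addable (lam : seq nat) (x : cell) : Prop :=
  ~~ in_diag lam x /\ young (fun y => in_diag lam y || (y == x)).

Definition content (x : cell) : int := (x.2%:Z - x.1%:Z)%R.

Definition cong_mod (l : nat) (c : int) (k : nat) : bool :=
  (l%:Z %| (c - k%:Z)%R)%Z.

Definition T_spec (l i : nat) (lam nu : seq nat) : Prop :=
  is_partition nu /\
  forall x : cell, in_diag nu x <->
    ((in_diag lam x /\ ~ (removable lam x /\ cong_mod l (content x) i))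
     \/ (addable lam x /\ cong_mod l (content x) i)).

Definition cells (lam : seq nat) : seq cell :=
  flatten [seq [seq (r, c) | c <- iota 1 (nth 0 lam r.-1)] | r <- iota 1 (size lam)].

Definition Ncount (l k : nat) (lam : seq nat) : int :=
  (count (fun x => cong_mod l (content x) k) (cells lam))%:Z.

(* d(lam) in Z^l, as a function on indices 0..l-1 *)
Definition dvec (l : nat) (lam : seq nat) : nat -> int := fun k => Ncount l k lam.

Definition sigma_act (l i : nat) (d : nat -> int) : nat -> int :=
  fun j => if j == i then
             (d (i.+1 %% l)%N + d ((i + l).-1 %% l)%N - d i
              + (if i == 0%N then 1 else 0))%R
           else d j.

Definition adj_cell (x y : cell) : bool :=
  ((x.1 == y.1) && ((x.2.+1 == y.2) || (y.2.+1 == x.2))) ||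
  ((x.2 == y.2) && ((x.1.+1 == y.1) || (y.1.+1 == x.1))).

Definition cells_connected (H : seq cell) : Prop :=
  forall a b, a \in H -> b \in H ->
    exists p : seq cell, path adj_cell a p /\ all (mem H) p /\ last a p = b.

Definition no_2x2 (H : seq cell) : Prop :=
  forall x : cell, ~ all (mem H) [:: x; (x.1.+1, x.2); (x.1, x.2.+1); (x.1.+1, x.2.+1)].

Definition rim_hook (lam : seq nat) (H : seq cell) : Prop :=
  uniq H /\ H != [::] /\ all (in_diag lam) H /\
  young (fun y => in_diag lam y && (y \notin H)) /\
  cells_connected H /\ no_2x2 H.

Definition is_core (l : nat) (lam : seq nat) : Prop :=
  ~ exists H, size H = l /\ rim_hook lam H.

From mathcomp Require Import all_boot all_order all_algebra zify.
Set Implicit Arguments. Unset Strict Implicit. Unset Printing Implicit Defensive.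
Import Order.TTheory GRing.Theory Num.Theory.

(* The diagram of T_i mu is mu with its addable cells of residue i added and its
   removable cells of residue i removed; two cells of equal residue are never
   adjacent when l > 1, so this is again a Young diagram.

   For every cell (r, c), inclusion-exclusion around the square with corners
   (r-1, c-1) and (r, c) gives
     [(r-1,c) in mu] + [(r,c-1) in mu] - [(r,c) in mu] - [(r-1,c-1) in mu]
       = [(r,c) addable] - [(r-1,c-1) removable] - [r = c = 1].
   Summing against the indicator of residue i and shifting the indices, the left
   side becomes N_{i+1} + N_{i-1} - 2 N_i, hence the numbers of addable and of
   removable cells of residue i differ by N_{i+1} + N_{i-1} - 2 N_i + [i = 0],
   which is the change of N_i under sigma_i.

   For cores, label the steps of the boundary of a diagram by contents (the
   beads and gaps of its Maya diagram): mu has a rim hook of length L iff a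
   vertical step labelled s and a horizontal step labelled s - L coexist.  The
   steps of T_i mu are those of mu with every label k = i (mod l) exchanged with
   k - 1, and this relabelling commutes with k |-> k - l, so T_i maps l-cores to
   l-cores. *)

(** * Young diagrams *)

Lemma in_diagE lam r c : in_diag lam (r, c) = [&& 0 < r, 0 < c & c <= nth 0 lam r.-1].
Proof.
rewrite /in_diag /=; case: r => [|r] //=; case: c => [|c] //=; rewrite ?andbF //.
by case: (ltnP r (size lam)) => // ge_r; rewrite nth_default.
Qed.

Definition cells_positive (P : pred cell) := forall r c, P (r, c) -> 0 < r /\ 0 < c.

Definition cells_bounded (P : pred cell) B := forall r c, P (r, c) -> r <= B /\ c <= B.

Definition down_closed (P : pred cell) :=
  forall r c r' c', P (r, c) -> 0 < r' <= r -> 0 < c' <= c -> P (r', c').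

Lemma in_diag_gt0 lam : cells_positive (in_diag lam).
Proof. by move=> r c; rewrite in_diagE => /and3P[]. Qed.

Lemma nth_partition_geq lam i j : is_partition lam -> i <= j -> nth 0 lam j <= nth 0 lam i.
Proof.
case/andP=> sorted_lam _ le_ij.
have [lt_j|ge_j] := ltnP j (size lam); last by rewrite nth_default.
apply: (sorted_leq_nth (rev_trans leq_trans) leqnn 0 sorted_lam) => //; rewrite inE //.
exact: leq_ltn_trans lt_j.
Qed.

Lemma in_diag_down_closed lam : is_partition lam -> down_closed (in_diag lam).
Proof.
move=> lam_part r c r' c'; rewrite !in_diagE => /and3P[_ _ le_c] /andP[-> le_r] /andP[-> le_c'].
by rewrite (leq_trans le_c' (leq_trans le_c _)) // nth_partition_geq // -!subn1 leq_sub2r.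
Qed.

Lemma young_down_closed P : young P -> down_closed P /\ cells_positive P.
Proof.
case=> lam [lam_part defP]; split => [r c r' c'|r c]; rewrite !defP.
  exact: in_diag_down_closed.
exact: in_diag_gt0.
Qed.

Lemma down_closed_step (P : pred cell) :
  (forall r c, P (r.+1, c) -> 0 < r -> P (r, c)) ->
  (forall r c, P (r, c.+1) -> 0 < c -> P (r, c)) -> down_closed P.
Proof.
move=> stepr stepc r c r' c' Prc /andP[r'_gt0 le_r] /andP[c'_gt0 le_c].
have col k : P (r' + k, c) -> P (r', c).
  by elim: k => [|k IH]; rewrite ?addn0 // addnS => /stepr P_next; apply/IH/P_next; lia.
have row k : P (r', c' + k) -> P (r', c').
  by elim: k => [|k IH]; rewrite ?addn0 // addnS => /stepc P_next; apply/IH/P_next; lia.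
by apply: (row (c - c')); rewrite subnKC //; apply: (col (r - r')); rewrite subnKC.
Qed.

Lemma down_closed_nat_iota (q : pred nat) B :
  (forall m n, q n -> 0 < m <= n -> q m) -> (forall n, q n -> 0 < n <= B) ->
  forall m, q m = (0 < m) && (m <= count q (iota 1 B)).
Proof.
move=> q_down; elim: B => [|B IH] q_bnd m.
  by apply/idP/andP => [/q_bnd|[] /=]; lia.
rewrite -[B.+1]addn1 iotaD count_cat /= addn0 add1n.
case q_B1: (q B.+1).
  have -> : count q (iota 1 B) = B.
    rewrite (eq_in_count (a2 := predT)) ?count_predT ?size_iota // => n.
    by rewrite mem_iota => n_le; apply: q_down q_B1 _; lia.
  by apply/idP/andP => [/q_bnd|[m_gt0 m_le]]; [lia|apply: q_down q_B1 _; lia].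
rewrite addn0; apply: IH => n qn; have := q_bnd n qn.
by case: (eqVneq n B.+1) => [eq_n|]; [rewrite eq_n q_B1 in qn|lia].
Qed.

Lemma sorted_geq_map_iota (f : nat -> nat) a n :
  (forall r, a <= r -> f r.+1 <= f r) -> sorted geq [seq f r | r <- iota a n].
Proof.
elim: n a => [|[|n] IH] a f_dec //=.
by rewrite f_dec //; apply: (IH a.+1) => r lt_ar; apply: f_dec (ltnW lt_ar).
Qed.

Lemma young_of_down_closed P B :
  cells_positive P -> down_closed P -> cells_bounded P B -> young P.
Proof.
move=> P_pos P_down P_bnd.
pose row_len r := count (fun c => P (r, c)) (iota 1 B).
pose nrows := count (fun r => P (r, 1)) (iota 1 B).
have col1E r : P (r, 1) = (0 < r) && (r <= nrows).
  apply: down_closed_nat_iota => [m n Pn m_le|n Pn]; first by apply: P_down Pn _ _.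
  by have := P_bnd _ _ Pn; have := P_pos _ _ Pn; lia.
have rowE r : 0 < r -> forall c, P (r, c) = (0 < c) && (c <= row_len r).
  move=> r_gt0; apply: down_closed_nat_iota => [m n Pn m_le|n Pn].
    by apply: P_down Pn _ _; rewrite ?leqnn ?r_gt0.
  by have := P_bnd _ _ Pn; have := P_pos _ _ Pn; lia.
exists [seq row_len r | r <- iota 1 nrows]; split.
  apply/andP; split.
    apply: sorted_geq_map_iota => r r_gt0; apply: sub_count => c /= Prc.
    by have := P_pos _ _ Prc; case=> _ c_gt0; apply: P_down Prc _ _; lia.
  apply/allP => x /mapP[r]; rewrite mem_iota => r_range ->.
  have : P (r, 1) by rewrite col1E; lia.
  by rewrite rowE; [case/andP|lia].
case=> [[|r] c]; rewrite in_diagE /=.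
  by apply/negbTE/negP => /P_pos; lia.
have [r_le|r_gt] := leqP r.+1 nrows.
  by rewrite (nth_map 0) ?size_iota ?nth_iota ?add1n ?rowE //; lia.
rewrite nth_default ?size_map ?size_iota /=; last lia.
apply/idP/idP => [Prc|]; last lia.
have [_ c_gt0] := P_pos _ _ Prc.
have := P_down _ _ r.+1 1 Prc; rewrite col1E; lia.
Qed.

Definition diag_bound (lam : seq nat) := size lam + nth 0 lam 0.

Lemma in_diag_bounded lam : is_partition lam -> cells_bounded (in_diag lam) (diag_bound lam).
Proof.
move=> lam_part r c; rewrite /in_diag /diag_bound /= => /andP[/andP[_ r_le] /andP[_ c_le]].
by have := nth_partition_geq lam_part (leq0n r.-1); lia.
Qed.

Definition removableb lam (x : cell) :=
  [&& in_diag lam x, ~~ in_diag lam (x.1.+1, x.2) & ~~ in_diag lam (x.1, x.2.+1)].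

Definition addableb lam (x : cell) :=
  [&& 0 < x.1, 0 < x.2, ~~ in_diag lam x,
      (x.1 == 1) || in_diag lam (x.1.-1, x.2) & (x.2 == 1) || in_diag lam (x.1, x.2.-1)].

Lemma removableP lam x : is_partition lam -> removable lam x <-> removableb lam x.
Proof.
move=> lam_part; case: x => r c; split.
  case=> in_x /young_down_closed[down _]; rewrite /removableb in_x /=.
  have [r_gt0 c_gt0] := in_diag_gt0 in_x.
  have stuck r' c' : in_diag lam (r', c') && ((r', c') != (r, c)) -> r <= r' -> c <= c' -> False.
    move=> in_y le_r le_c; suff : in_diag lam (r, c) && ((r, c) != (r, c)) by rewrite eqxx andbF.
    by apply: down in_y _ _; lia.
  apply/andP; split; apply/negP => in_y.
    by apply: (stuck r.+1 c); rewrite ?in_y ?xpair_eqE; lia.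
  by apply: (stuck r c.+1); rewrite ?in_y ?xpair_eqE; lia.
case/and3P=> in_x out_below out_right; split => //.
have lam_down := in_diag_down_closed lam_part.
apply: (@young_of_down_closed _ (diag_bound lam)).
- by move=> r' c' /andP[/in_diag_gt0].
- apply: down_closed_step => r' c' /andP[in_y ne_y] y_gt0; apply/andP.
    have [_ c'_gt0] := in_diag_gt0 in_y; split; first by apply: lam_down in_y _ _; lia.
    by apply: contraNneq out_below => -[<- <-].
  have [r'_gt0 _] := in_diag_gt0 in_y; split; first by apply: lam_down in_y _ _; lia.
  by apply: contraNneq out_right => -[<- <-].
- by move=> r' c' /andP[/(in_diag_bounded lam_part)].
Qed.

Lemma addableP lam x : is_partition lam -> addable lam x <-> addableb lam x.
Proof.
move=> lam_part; case: x => r c; split.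
  case=> out_x /young_down_closed[down pos].
  have [r_gt0 c_gt0] : 0 < r /\ 0 < c by apply: pos; rewrite eqxx orbT.
  have below r' c' : 0 < r' <= r -> 0 < c' <= c -> (r', c') != (r, c) -> in_diag lam (r', c').
    move=> le_r le_c ne_y; have := down r c r' c'; rewrite eqxx orbT (negbTE ne_y) orbF.
    exact.
  rewrite /addableb /= r_gt0 c_gt0 out_x /=.
  by apply/andP; split; case: eqP => //= ne1; apply: below; rewrite ?xpair_eqE; lia.
case/and5P=> /= r_gt0 c_gt0 out_x above left; split => //.
have lam_down := in_diag_down_closed lam_part.
have lam_bnd := in_diag_bounded lam_part.
apply: (@young_of_down_closed _ (diag_bound lam).+1).
- by move=> r' c' /orP[/in_diag_gt0 //|/eqP[-> ->]].
- apply: down_closed_step => r' c' /orP[in_y|/eqP[? ?]] y_gt0; subst; apply/orP; left.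
  + by have [_ ?] := in_diag_gt0 in_y; apply: lam_down in_y _ _; lia.
  + by move: above => /= /orP[/eqP|] //; lia.
  + by have [? _] := in_diag_gt0 in_y; apply: lam_down in_y _ _; lia.
  + by move: left => /= /orP[/eqP|] //; lia.
- move=> r' c' /orP[/lam_bnd|/eqP[-> ->]]; first lia.
  by case/orP: above => [/eqP ->|/lam_bnd]; case/orP: left => [/eqP ->|/lam_bnd]; lia.
Qed.

(** * Residues of contents *)

Section Residues.
Local Open Scope ring_scope.
Variable l : nat.

Lemma dvdz_small (x : int) : (l%:Z %| x)%Z -> (`|x| < l)%N -> x = 0.
Proof.
rewrite dvdzE absz_nat => dvd_x lt_x; apply/eqP; rewrite -absz_eq0.
by apply: contraTT lt_x; rewrite -lt0n -leqNgt => /dvdn_leq; apply.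
Qed.

Lemma cong_mod_modn c k : cong_mod l c (k %% l) = cong_mod l c k.
Proof.
rewrite /cong_mod; have -> : c - (k %% l)%N%:Z = c - k%:Z + (l * (k %/ l))%N%:Z.
  by have := divn_eq k l; lia.
by rewrite rpredDr // PoszM dvdz_mulr.
Qed.

Lemma cong_modDr c k d : (l%:Z %| d)%Z -> cong_mod l (c + d) k = cong_mod l c k.
Proof.
by move=> dvd_d; rewrite /cong_mod addrAC rpredDr.
Qed.

Lemma cong_modB1 c k : cong_mod l (c - 1) k = cong_mod l c k.+1.
Proof. by rewrite /cong_mod; congr (_ %| _)%Z; lia. Qed.

Lemma cong_modD1 c k : (0 < l)%N -> cong_mod l (c + 1) k = cong_mod l c (k + l).-1.
Proof.
move=> l_gt0; rewrite -(cong_modDr c (k + l).-1 (dvdzz l%:Z)) /cong_mod.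
by congr (_ %| _)%Z; lia.
Qed.

Lemma cong_mod0 k : (k < l)%N -> cong_mod l 0 k = (k == 0)%N.
Proof.
move=> lt_k; rewrite /cong_mod sub0r rpredN; apply/idP/eqP => [dvd_k|->]; last exact: dvdz0.
by case: (dvdz_small dvd_k lt_k).
Qed.

Lemma cong_mod_inj c j k : (j < l)%N -> (k < l)%N -> cong_mod l c j -> cong_mod l c k -> j = k.
Proof.
move=> lt_j lt_k cj ck; have := rpredB ck cj.
have -> : c - k%:Z - (c - j%:Z) = j%:Z - k%:Z by lia.
by move/dvdz_small => /(_ _) eq0; apply/eqP; rewrite -eqz_nat -subr_eq0 eq0 //; lia.
Qed.

Lemma cong_mod_succ_neq c k : (1 < l)%N -> cong_mod l c k -> ~~ cong_mod l (c + 1) k.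
Proof.
move=> l_gt1 ck; apply/negP => c1k; have := rpredB c1k ck.
have -> : c + 1 - k%:Z - (c - k%:Z) = 1 by lia.
by move/dvdz_small => /(_ l_gt1).
Qed.

End Residues.

Lemma content_succ_row r c : content (r.+1, c) = (content (r, c) - 1)%R.
Proof. rewrite /content /=; lia. Qed.

Lemma content_succ_col r c : content (r, c.+1) = (content (r, c) + 1)%R.
Proof. rewrite /content /=; lia. Qed.

Definition of_residue l i (x : cell) := cong_mod l (content x) i.

Lemma of_residue_col_succ l i r c :
  (1 < l)%N -> of_residue l i (r, c) -> ~~ of_residue l i (r, c.+1).
Proof. by rewrite /of_residue content_succ_col; apply: cong_mod_succ_neq. Qed.

Lemma of_residue_row_succ l i r c :
  (1 < l)%N -> of_residue l i (r.+1, c) -> ~~ of_residue l i (r, c).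
Proof.
rewrite /of_residue content_succ_row => l_gt1 res; apply/negP => res'.
by have := cong_mod_succ_neq l_gt1 res; rewrite subrK res'.
Qed.

(** * The operator T_i *)

Definition T_diag l i lam (x : cell) :=
  (in_diag lam x && ~~ (removableb lam x && of_residue l i x))
  || (addableb lam x && of_residue l i x).

Lemma addableb_bounded lam : is_partition lam -> cells_bounded (addableb lam) (diag_bound lam).+1.
Proof.
move=> lam_part r c /and5P[/= _ _ _ above left]; have lam_bnd := in_diag_bounded lam_part.
by case/orP: above => [/eqP ->|/lam_bnd]; case/orP: left => [/eqP ->|/lam_bnd]; lia.
Qed.

Lemma T_diag_young l i lam : (1 < l)%N -> is_partition lam -> young (T_diag l i lam).
Proof.
move=> l_gt1 lam_part; have lam_down := in_diag_down_closed lam_part.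
apply: (@young_of_down_closed _ (diag_bound lam).+1).
- by move=> r c /orP[/andP[/in_diag_gt0 //]|/andP[/and5P[]]].
- apply: down_closed_step => r c /orP[/andP[in_y _]|/andP[add_y res_y]] pos; apply/orP; left.
  + have [_ c_gt0] := in_diag_gt0 in_y.
    by rewrite (lam_down _ _ _ _ in_y) /removableb ?in_y ?andbF //; lia.
  + move: add_y => /and5P[/= _ c_gt0 _ above _]; rewrite -[r.+1 == 1]/(r == 0) gtn_eqF //= in above.
    by rewrite above (negbTE (of_residue_row_succ l_gt1 res_y)) andbF.
  + have [r_gt0 _] := in_diag_gt0 in_y.
    by rewrite (lam_down _ _ _ _ in_y) /removableb ?in_y ?andbF //; lia.
  + move: add_y => /and5P[/= _ _ _ _ left]; rewrite -[c.+1 == 1]/(c == 0) gtn_eqF //= in left.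
    by rewrite left /=; apply: contraTN res_y => /andP[_ /(of_residue_col_succ l_gt1)].
- move=> r c /orP[/andP[/(in_diag_bounded lam_part) ? _]|/andP[/(addableb_bounded lam_part) ? _]];
    lia.
Qed.

Lemma T_diagP l i lam x : is_partition lam ->
  T_diag l i lam x <->
  (in_diag lam x /\ ~ (removable lam x /\ cong_mod l (content x) i))
  \/ (addable lam x /\ cong_mod l (content x) i).
Proof.
move=> lam_part; rewrite removableP // addableP // /T_diag /of_residue.
by case: (in_diag lam x); case: (removableb lam x); case: (addableb lam x);
  case: (cong_mod l (content x) i); intuition.
Qed.

Lemma T_spec_exists l i lam : (1 < l)%N -> is_partition lam -> exists nu, T_spec l i lam nu.
Proof.
move=> l_gt1 lam_part; have [nu [nu_part defT]] := T_diag_young i l_gt1 lam_part.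
by exists nu; split => // x; rewrite -defT T_diagP.
Qed.

Lemma T_spec_in_diag l i lam nu : is_partition lam -> T_spec l i lam nu ->
  in_diag nu =1 T_diag l i lam.
Proof.
move=> lam_part [_ defT] x; apply/idP/idP => [/defT|].
  by rewrite T_diagP.
by rewrite T_diagP // => /defT.
Qed.

(** * Counting cells by residue *)

Lemma mem_cells lam x : (x \in cells lam) = in_diag lam x.
Proof.
case: x => r c; apply/allpairsPdep/idP => [[r' [c' [+ + [-> ->]]]]|].
  by rewrite !mem_iota /in_diag /=; lia.
by case/andP=> r_range c_range; exists r, c; rewrite !mem_iota; split => //; lia.
Qed.

Lemma cells_uniq lam : uniq (cells lam).
Proof.
apply: allpairs_uniq_dep => [||[r c] [r' c'] _ _ /= [-> ->]] //; first exact: iota_uniq.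
by move=> r _; exact: iota_uniq.
Qed.

Section Counting.
Local Open Scope ring_scope.

Definition iverson (b : bool) : int := (b : nat)%:Z.

Lemma iversonM a b : iverson (a && b) = iverson a * iverson b.
Proof. by case: a; case: b. Qed.

Lemma count_iverson T (a : pred T) s : (count a s)%:Z = \sum_(x <- s) iverson (a x).
Proof. by elim: s => [|x s IH]; rewrite ?big_nil ?big_cons //= PoszD IH. Qed.

Variable B : nat.

Definition boxsum (F : nat -> nat -> int) := \sum_(0 <= r < B) \sum_(0 <= c < B) F r c.

Lemma eq_boxsum F G : (forall r c, F r c = G r c) -> boxsum F = boxsum G.
Proof. by move=> eqFG; apply: eq_bigr => r _; apply: eq_bigr. Qed.

Lemma boxsum0 : boxsum (fun _ _ => 0) = 0.
Proof. by rewrite /boxsum big1 // => r _; rewrite big1. Qed.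

Lemma boxsumD F G : boxsum (fun r c => F r c + G r c) = boxsum F + boxsum G.
Proof. by rewrite /boxsum -big_split; apply: eq_bigr => r _; rewrite big_split. Qed.

Lemma boxsumN F : boxsum (fun r c => - F r c) = - boxsum F.
Proof. by rewrite /boxsum -sumrN; apply: eq_bigr => r _; rewrite sumrN. Qed.

Lemma boxsumB F G : boxsum (fun r c => F r c - G r c) = boxsum F - boxsum G.
Proof. by rewrite boxsumD boxsumN. Qed.

Lemma big_nat_shift1 (F : nat -> int) : F 0%N = 0 -> F B = 0 ->
  \sum_(0 <= r < B) F r = \sum_(0 <= r < B) F r.+1.
Proof.
case: B => [|B'] F0 FB; first by rewrite !big_geq.
by rewrite big_nat_recl // F0 add0r big_nat_recr //= FB addr0.
Qed.

Lemma boxsum_shift_row F : (forall c, F 0%N c = 0) -> (forall c, F B c = 0) ->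
  boxsum F = boxsum (fun r c => F r.+1 c).
Proof. by move=> F0 FB; rewrite /boxsum big_nat_shift1 //; apply: big1 => c _; rewrite ?F0 ?FB. Qed.

Lemma boxsum_shift_col F : (forall r, F r 0%N = 0) -> (forall r, F r B = 0) ->
  boxsum F = boxsum (fun r c => F r c.+1).
Proof. by move=> F0 FB; apply: eq_bigr => r _; rewrite big_nat_shift1. Qed.

Lemma big_nat_iverson1 (f : nat -> int) : (1 < B)%N ->
  \sum_(0 <= r < B) iverson (r == 1)%N * f r = f 1%N.
Proof.
move=> B_gt1; rewrite (bigD1_seq 1%N) ?mem_index_iota ?iota_uniq //= mul1r big1_seq ?addr0 //.
by move=> r /andP[/negbTE -> _]; rewrite mul0r.
Qed.

Lemma boxsum_iverson11 K : (1 < B)%N ->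
  boxsum (fun r c => iverson ((r == 1)%N && (c == 1)%N) * K) = K.
Proof.
move=> B_gt1; rewrite /boxsum -[RHS](big_nat_iverson1 (fun _ => K)) //.
rewrite -(big_nat_iverson1 (fun r => \sum_(0 <= c < B) iverson (c == 1)%N * K)) //.
apply: eq_bigr => r _; rewrite mulr_sumr; apply: eq_bigr => c _.
by case: (r == 1)%N; rewrite /iverson /= ?mul1r ?mul0r.
Qed.

Lemma Ncount_boxsum l k lam : (forall r c, in_diag lam (r, c) -> r < B /\ c < B)%N ->
  Ncount l k lam =
  boxsum (fun r c => iverson (of_residue l k (r, c)) * iverson (in_diag lam (r, c))).
Proof.
move=> lam_bnd; pose box := [seq (r, c) | r <- index_iota 0 B, c <- index_iota 0 B].
have box_cells : perm_eq (cells lam) [seq x <- box | in_diag lam x].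
  apply: uniq_perm; rewrite ?filter_uniq ?cells_uniq //.
    by apply: allpairs_uniq => [||[r c] [r' c'] _ _ /= [-> ->]]; rewrite ?iota_uniq.
  case=> r c; rewrite mem_filter mem_cells; case in_x: (in_diag _ _) => //=.
  have [lt_r lt_c] := lam_bnd _ _ in_x.
  by apply/esym/allpairsP; exists (r, c); split; rewrite //= mem_index_iota.
rewrite /Ncount count_iverson (perm_big _ box_cells) big_filter big_mkcond big_allpairs.
apply: eq_bigr => r _; apply: eq_bigr => c _.
by rewrite /of_residue; case: (in_diag _ _); case: (cong_mod _ _ _).
Qed.

End Counting.

Lemma corner_identity lam r c : is_partition lam ->
  (iverson (in_diag lam (r.-1, c)) + iverson (in_diag lam (r, c.-1))
   - iverson (in_diag lam (r, c)) - iverson (in_diag lam (r.-1, c.-1))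
  = iverson (addableb lam (r, c)) - iverson (removableb lam (r.-1, c.-1))
    - iverson ((r == 1) && (c == 1))%N)%R.
Proof.
move=> lam_part; have down := in_diag_down_closed lam_part.
have up r' c' : in_diag lam (r'.+2, c') -> in_diag lam (r'.+1, c').
  by move=> in_y; have [_ ?] := in_diag_gt0 in_y; apply: down in_y _ _; lia.
have left r' c' : in_diag lam (r', c'.+2) -> in_diag lam (r', c'.+1).
  by move=> in_y; have [? _] := in_diag_gt0 in_y; apply: down in_y _ _; lia.
have row0 c' : in_diag lam (0, c') = false by [].
have col0 r' : in_diag lam (r', 0) = false by rewrite /in_diag andbF.
case: r => [|[|r]]; case: c => [|[|c]]; rewrite /addableb /removableb /= ?row0 ?col0 //=.
- by case: (in_diag lam (1%N, 1%N)).
- move/implyP: (left 1%N c).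
  by case: (in_diag lam (1%N, c.+2)); case: (in_diag lam (1%N, c.+1)).
- move/implyP: (up r 1%N).
  by case: (in_diag lam (r.+2, 1%N)); case: (in_diag lam (r.+1, 1%N)).
- move/implyP: (up r c.+2); move/implyP: (up r c.+1).
  move/implyP: (left r.+1 c); move/implyP: (left r.+2 c).
  by case: (in_diag lam (r.+2, c.+2)); case: (in_diag lam (r.+1, c.+2));
    case: (in_diag lam (r.+2, c.+1)); case: (in_diag lam (r.+1, c.+1)).
Qed.

Lemma iverson_T_diag l i lam x :
  iverson (T_diag l i lam x) = (iverson (in_diag lam x)
    + iverson (of_residue l i x) * (iverson (addableb lam x) - iverson (removableb lam x)))%R.
Proof.
have rem_in : removableb lam x ==> in_diag lam x by apply/implyP => /and3P[].
have add_out : addableb lam x ==> ~~ in_diag lam x by apply/implyP => /and5P[].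
rewrite /T_diag; move: rem_in add_out.
by case: (in_diag lam x); case: (removableb lam x); case: (addableb lam x);
  case: (of_residue l i x).
Qed.

Section Equivariance.
Local Open Scope ring_scope.
Variables (l i : nat) (mu : seq nat).
Hypotheses (l_gt1 : (1 < l)%N) (lt_il : (i < l)%N) (mu_part : is_partition mu).

(* The box [0, B) x [0, B) contains the cells of mu and its addable cells, and its
   last row and column, like its row and column 0, contain no cell of mu. *)
Let B := (diag_bound mu).+2.
Let X r c := iverson (in_diag mu (r, c)).
Let res k r c := iverson (of_residue l k (r, c)).

Let diag_lt_box r c : in_diag mu (r, c) -> (r < B.-1)%N /\ (c < B.-1)%N.
Proof. by move/(in_diag_bounded mu_part). Qed.

Lemma dvec_boxsum k : dvec l mu k = boxsum B (fun r c => res k r c * X r c).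
Proof. by apply: Ncount_boxsum => r c /diag_lt_box; lia. Qed.

Let X_out r c : (B.-1 <= r)%N || (B.-1 <= c)%N -> X r c = 0.
Proof.
by move=> out; rewrite /X; case in_rc: (in_diag _ _) => //; have := diag_lt_box in_rc; lia.
Qed.

Let X_row0 c : X 0%N c = 0. Proof. by []. Qed.

Let X_col0 r : X r 0%N = 0. Proof. by rewrite /X /in_diag andbF. Qed.

Let X_rowB c : X B.-1 c = 0. Proof. by rewrite X_out ?leqnn. Qed.

Let X_colB r : X r B.-1 = 0. Proof. by rewrite X_out ?leqnn ?orbT. Qed.

Lemma boxsum_above k : boxsum B (fun r c => res k r c * X r.-1 c) = dvec l mu (k.+1 %% l).
Proof.
rewrite boxsum_shift_row => [|c|c]; rewrite ?X_row0 ?X_rowB ?mulr0 //.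
rewrite dvec_boxsum; apply: eq_boxsum => r c.
by rewrite /res /of_residue content_succ_row cong_modB1 cong_mod_modn.
Qed.

Lemma boxsum_left k : boxsum B (fun r c => res k r c * X r c.-1) = dvec l mu ((k + l).-1 %% l).
Proof.
rewrite boxsum_shift_col => [|r|r]; rewrite ?X_col0 ?X_colB ?mulr0 //.
rewrite dvec_boxsum; apply: eq_boxsum => r c.
by rewrite /res /of_residue content_succ_col cong_modD1 ?cong_mod_modn //; lia.
Qed.

Lemma boxsum_diag_shift (F : nat -> nat -> int) k :
  (forall c, F 0%N c = 0) -> (forall r, F r 0%N = 0) ->
  (forall c, F B.-1 c = 0) -> (forall r, F r B.-1 = 0) ->
  boxsum B (fun r c => res k r c * F r.-1 c.-1) = boxsum B (fun r c => res k r c * F r c).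
Proof.
move=> F_r0 F_c0 F_rB F_cB.
rewrite boxsum_shift_row => [|c|c]; rewrite ?F_r0 ?F_rB ?mulr0 //.
rewrite boxsum_shift_col => [|r|r]; rewrite ?F_c0 ?F_cB ?mulr0 //.
apply: eq_boxsum => r c; rewrite /res /of_residue content_succ_row content_succ_col.
by rewrite addrK.
Qed.

Lemma addable_pointwise r c : res i r c * iverson (addableb mu (r, c)) =
  res i r c * X r.-1 c + res i r c * X r c.-1 - res i r c * X r c - res i r c * X r.-1 c.-1
  + res i r c * iverson (removableb mu (r.-1, c.-1))
  + iverson ((r == 1) && (c == 1))%N * res i 1%N 1%N.
Proof.
have := corner_identity r c mu_part; rewrite -!/(X _ _).
case: andP => [[/eqP -> /eqP ->]|_]; rewrite /res;
  by case: (of_residue _ _ _); rewrite ?mul1r ?mul0r ?mulr0 ?addr0 ?subr0 //=; lia.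
Qed.

Let removableb_out r c : (r == 0)%N || (c == 0)%N || (B.-1 <= r)%N || (B.-1 <= c)%N ->
  iverson (removableb mu (r, c)) = 0.
Proof.
move=> out; rewrite /removableb; case in_rc: (in_diag _ _) => //=.
by have := diag_lt_box in_rc; have := in_diag_gt0 in_rc; lia.
Qed.

Lemma boxsum_addable_removable :
  boxsum B (fun r c => res i r c * iverson (addableb mu (r, c)))
  - boxsum B (fun r c => res i r c * iverson (removableb mu (r, c)))
  = dvec l mu (i.+1 %% l) + dvec l mu ((i + l).-1 %% l) - dvec l mu i - dvec l mu i
    + iverson (i == 0)%N.
Proof.
apply/eqP; rewrite subr_eq; apply/eqP.
rewrite (eq_boxsum _ addable_pointwise) !boxsumD !boxsumN boxsum_above boxsum_left -dvec_boxsum.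
rewrite (boxsum_diag_shift i X_row0 X_col0 X_rowB X_colB) -dvec_boxsum.
rewrite (boxsum_diag_shift (F := fun r c => iverson (removableb mu (r, c)))); first last.
- by move=> r; rewrite removableb_out ?leqnn ?orbT.
- by move=> c; rewrite removableb_out ?leqnn ?orbT.
- by move=> r; rewrite removableb_out ?orbT.
- by move=> c; rewrite removableb_out.
rewrite boxsum_iverson11 ?/B // /res /of_residue /content subrr cong_mod0 //; lia.
Qed.

Lemma dvec_T_spec nu : T_spec l i mu nu -> forall j, (j < l)%N ->
  dvec l nu j = sigma_act l i (dvec l mu) j.
Proof.
move=> T_nu j lt_jl; have nuE := T_spec_in_diag mu_part T_nu.
have nu_bnd r c : in_diag nu (r, c) -> (r < B)%N /\ (c < B)%N.
  by rewrite nuE => /orP[/andP[/diag_lt_box]|/andP[/(addableb_bounded mu_part)]]; lia.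
rewrite /dvec (Ncount_boxsum _ _ nu_bnd).
under eq_boxsum => r c do rewrite nuE iverson_T_diag mulrDr.
rewrite boxsumD -dvec_boxsum /sigma_act.
under eq_boxsum => r c do rewrite mulrA -iversonM.
case: eqVneq => [-> | ne_ji].
  under eq_boxsum => r c do rewrite andbb mulrBr.
  rewrite boxsumB boxsum_addable_removable /dvec /iverson; case: (i == 0)%N => /=; lia.
rewrite (eq_boxsum _ (G := fun _ _ => 0)) => [|r c]; last first.
  case: andP => [[res_j res_i]|_]; last by rewrite mul0r.
  by move: ne_ji; rewrite (cong_mod_inj lt_jl lt_il res_j res_i) eqxx.
by rewrite boxsum0 addr0.
Qed.

End Equivariance.

(** * Boundary steps and rim hooks *)

(* Walking along the boundary of a diagram P, the vertical step ending row r,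
   whose last cell is (r, c) (with c = 0 for an empty row), is labelled by the
   content c - r, and the horizontal step closing column c, whose last cell is
   (r, c) (with r = 0 for an empty column), by the content c - r - 1 of the cell
   just below. *)
Definition vertical_edge (P : pred cell) (k : int) := exists r c,
  [/\ 0 < r, c = 0 \/ P (r, c), ~~ P (r, c.+1) & content (r, c) = k].

Definition horizontal_edge (P : pred cell) (k : int) := exists r c,
  [/\ 0 < c, r = 0 \/ P (r, c), ~~ P (r.+1, c) & content (r.+1, c) = k].

Lemma edge_labels_disjoint P k : down_closed P ->
  vertical_edge P k -> horizontal_edge P k -> False.
Proof.
move=> P_down [r [c [r_gt0 Prc outV eqk]]] [r' [c' [c'_gt0 Prc' outH eqk']]].
have eq_c : (c%:Z - r%:Z = c'%:Z - r'%:Z - 1)%R by move: eqk eqk'; rewrite /content /=; lia.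
have [le_r|lt_r] := leqP r'.+1 r.
  case: Prc => [c0|Prc]; first lia.
  by move/negP: outH; apply; apply: P_down Prc _ _; lia.
case: Prc' => [r'0|Prc']; first lia.
by move/negP: outV; apply; apply: P_down Prc' _ _; lia.
Qed.

Definition swap_label l i (k : int) : int :=
  if cong_mod l k i then (k - 1)%R else if cong_mod l (k + 1) i then (k + 1)%R else k.

Lemma swap_labelBl l i k : swap_label l i (k - l%:Z)%R = (swap_label l i k - l%:Z)%R.
Proof.
have dvd_l : (l%:Z %| (- l%:Z)%R)%Z by rewrite rpredN dvdzz.
rewrite /swap_label (cong_modDr _ _ dvd_l) [(k - l%:Z + 1)%R]addrAC (cong_modDr _ _ dvd_l).
by case: ifP => _; [|case: ifP => _]; lia.
Qed.

Section TEdges.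
Variables (l i : nat) (lam nu : seq nat).
Hypotheses (l_gt1 : 1 < l) (lam_part : is_partition lam) (T_nu : T_spec l i lam nu).
Local Notation P := (in_diag lam).
Local Notation Q := (T_diag l i lam).

Let P_down := in_diag_down_closed lam_part.

Lemma T_diag_nres x : ~~ of_residue l i x -> Q x = P x.
Proof. by move/negbTE=> nres; rewrite /T_diag nres !andbF /= andbT orbF. Qed.

Lemma T_diag_res x : of_residue l i x -> Q x = (P x && ~~ removableb lam x) || addableb lam x.
Proof. by move=> res; rewrite /T_diag res !andbT. Qed.

Lemma vertical_edge_T k : vertical_edge (in_diag nu) k -> vertical_edge P (swap_label l i k).
Proof.
case=> r [c [r_gt0 Qrc notQ <-]]; rewrite !(T_spec_in_diag lam_part T_nu) in Qrc notQ.
rewrite /swap_label.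
case: ifP => [res|nres]; [|case: ifP => [res1|nres1]].
- have notP : ~~ P (r, c.+1) by rewrite -T_diag_nres // of_residue_col_succ.
  case: Qrc => [c0|]; first subst c.
    exists r.+1, 0; split; rewrite ?content_succ_row //; first by left.
    by apply: contra notP => /P_down; apply; lia.
  rewrite T_diag_res //; case Prc: (P (r, c)) => /=.
    rewrite /addableb /removableb /= Prc (negbTE notP) !andbF /= orbF andbT negbK => below.
    exists r.+1, c; split; rewrite ?content_succ_row //; first by right.
    by apply: contra notP => /P_down; apply; lia.
  case/and5P=> _ /= c_gt0 _ _ left.
  exists r, c.-1; rewrite prednK // Prc; split => //.
    by case/orP: left => [/eqP ->|]; [left|right].
  by rewrite /content /=; lia.
- move: notQ; rewrite T_diag_res ?/of_residue ?content_succ_col //.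
  rewrite T_diag_nres /of_residue ?nres // in Qrc.
  case Prc1: (P (r, c.+1)) => /=.
    rewrite negb_or negbK => /andP[/and3P[_ below right] _].
    by exists r, c.+1; split; rewrite ?content_succ_col //; right.
  rewrite /addableb /= r_gt0 Prc1 /=.
  have -> : (c.+1 == 1) || P (r, c) by case: Qrc => [->|->]; rewrite ?orbT.
  rewrite andbT negb_or => /andP[r_ne1 notP].
  exists r.-1, c; split=> //; [lia| |by rewrite /content /=; lia].
  case: Qrc => [c0|Prc]; [by left|right].
  by have [? ?] := in_diag_gt0 Prc; apply: P_down Prc _ _; lia.
- rewrite T_diag_nres /of_residue ?nres // in Qrc.
  rewrite T_diag_nres /of_residue ?content_succ_col ?nres1 // in notQ.
  by exists r, c.
Qed.

Lemma horizontal_edge_T k :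
  horizontal_edge (in_diag nu) k -> horizontal_edge P (swap_label l i k).
Proof.
case=> r [c [c_gt0 Qrc notQ <-]]; rewrite !(T_spec_in_diag lam_part T_nu) in Qrc notQ.
rewrite /swap_label.
have eq_k : (content (r.+1, c) + 1)%R = content (r, c) by rewrite content_succ_row subrK.
case: ifP => [res|nres]; [|case: ifP => [res1|nres1]].
- rewrite T_diag_nres ?(of_residue_row_succ l_gt1 res) // in Qrc.
  move: notQ; rewrite T_diag_res //; case Pr1c: (P (r.+1, c)) => /=.
    rewrite /addableb /removableb /= Pr1c !andbF /= orbF negbK => /andP[notP2 _].
    by exists r.+1, c; split; rewrite ?content_succ_row //; right.
  rewrite /addableb /= Pr1c c_gt0 /=.
  have -> : (r.+1 == 1) || P (r, c) by case: Qrc => [->|->]; rewrite ?orbT.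
  rewrite negb_or => /andP[c_ne1 notP].
  exists r, c.-1; split=> //; [lia| |by rewrite /content /=; lia].
  case: Qrc => [r0|Prc]; [by left|right].
  by have [? ?] := in_diag_gt0 Prc; apply: P_down Prc _ _; lia.
- have notP : ~~ P (r.+1, c) by rewrite -T_diag_nres // /of_residue nres.
  rewrite eq_k in res1 *; case: Qrc => [r0|]; first subst r.
    exists 0, c.+1; split=> //; [by left| |by rewrite /content /=; lia].
    by apply: contra notP => /P_down; apply; lia.
  rewrite T_diag_res //; case Prc: (P (r, c)) => /=.
    rewrite /addableb /removableb /= Prc (negbTE notP) !andbF /= orbF negbK => Prc1.
    exists r, c.+1; split=> //; [by right| |by rewrite /content /=; lia].
    by apply: contra notP => /P_down; apply; lia.
  case/and5P=> /= r_gt0 _ _ above _.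
  exists r.-1, c; rewrite prednK // Prc; split=> //.
  by case/orP: above => [/eqP ->|]; [left|right].
- rewrite T_diag_nres /of_residue -?eq_k ?nres1 // in Qrc.
  rewrite T_diag_nres /of_residue ?nres // in notQ.
  by exists r, c.
Qed.

End TEdges.

Lemma adj_cell_sym : symmetric adj_cell.
Proof. by case=> [r c] [r' c']; rewrite /adj_cell /=; apply/idP/idP; lia. Qed.

Lemma adj_cell_content x y : adj_cell x y ->
  content y = (content x + 1)%R \/ content y = (content x - 1)%R.
Proof. by case: x y => [r c] [r' c']; rewrite /adj_cell /content /=; lia. Qed.

Lemma path_content_ivt x p (t : int) : path adj_cell x p ->
  (content x <= t <= content (last x p))%R -> exists2 z, z \in x :: p & content z = t.
Proof.
elim: p x => [|y p IH] x /=; first by move=> _ le_t; exists x; rewrite ?mem_head //; lia.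
case/andP=> adj_xy path_p le_t; have [->|ne_t] := eqVneq t (content x).
  by exists x; rewrite ?mem_head.
have [z z_p <-] : exists2 z, z \in y :: p & content z = t.
  by apply: IH => //; case: (adj_cell_content adj_xy) => ->; lia.
by exists z; rewrite // inE z_p orbT.
Qed.

Lemma path_cells_connected x p : path adj_cell x p -> cells_connected (x :: p).
Proof.
elim: p x => [|y p IH] x; first by move=> _ a b; rewrite !inE => /eqP -> /eqP ->; exists [::].
move=> /= /andP[adj_xy path_p] a b.
have widen q : all (mem (y :: p)) q -> all (mem (x :: y :: p)) q.
  by apply: sub_all => z /= z_p; rewrite inE z_p orbT.
rewrite [a \in _]in_cons [b \in _]in_cons => /orP[/eqP->|a_p] /orP[/eqP->|b_p].
- by exists [::].
- have [q [path_q [q_p <-]]] := IH y path_p y b (mem_head _ _) b_p.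
  exists (y :: q); split; first by rewrite /= adj_xy.
  by split=> //=; rewrite inE mem_head orbT widen.
- have [q [path_q [q_p last_q]]] := IH y path_p a y a_p (mem_head _ _).
  exists (rcons q x); split; first by rewrite rcons_path path_q last_q adj_cell_sym.
  by rewrite last_rcons all_rcons [mem _ x]mem_head widen.
- have [q [path_q [q_p last_q]]] := IH y path_p a b a_p b_p.
  by exists q; rewrite widen.
Qed.

Lemma seq_argmax (T : eqType) (f : T -> int) (s : seq T) : s != [::] ->
  exists2 x, x \in s & forall y, y \in s -> (f y <= f x)%R.
Proof.
elim: s => [|x s IH] // _; have [->|s_ne] := eqVneq s [::].
  by exists x; rewrite ?mem_head // => y; rewrite inE => /eqP ->.
have [m m_s m_max] := IH s_ne; have [le_xm|lt_mx] := lerP (f x) (f m).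
  by exists m; rewrite ?inE ?m_s ?orbT // => y; rewrite inE => /orP[/eqP ->|/m_max].
by exists x; rewrite ?mem_head // => y; rewrite inE => /orP[/eqP ->|/m_max] //; lia.
Qed.

Lemma seq_argmin (T : eqType) (f : T -> int) (s : seq T) : s != [::] ->
  exists2 x, x \in s & forall y, y \in s -> (f x <= f y)%R.
Proof.
move=> s_ne; have [x x_s x_max] := seq_argmax (fun y => - f y)%R s_ne.
by exists x => // y /x_max; rewrite lerN2.
Qed.

Section RimHookEdges.
Variables (lam : seq nat) (H : seq cell).
Hypotheses (lam_part : is_partition lam) (hookH : rim_hook lam H).
Local Notation P := (in_diag lam).

Lemma rim_hook_sub x : x \in H -> P x.
Proof. by case: hookH => _ [_ [/allP H_lam _]]; apply: H_lam. Qed.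

Lemma rim_hook_upper_closed x z : x \in H -> P z -> x.1 <= z.1 -> x.2 <= z.2 -> z \in H.
Proof.
case: hookH => _ [_ [_ [/young_down_closed[rest_down _] _]]].
case: x z => [r c] [r' c'] x_H Pz /= le_r le_c; apply/negPn/negP => z_H.
have [r_gt0 c_gt0] := in_diag_gt0 (rim_hook_sub x_H).
suff /andP[_] : P (r, c) && ((r, c) \notin H) by rewrite x_H.
by apply: (rest_down r' c'); rewrite ?Pz ?z_H //; lia.
Qed.

Lemma rim_hook_content_inj : {in H &, injective content}.
Proof.
have no_square := hookH.2.2.2.2.2.
suff le_inj x y : x \in H -> y \in H -> content x = content y -> x.1 <= y.1 -> x = y.
  move=> x y x_H y_H eq_xy; have [le_xy|/ltnW le_yx] := leqP x.1 y.1; first exact: le_inj.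
  exact/esym/le_inj.
case: x y => [r c] [r' c'] x_H y_H; rewrite /content /= => eq_xy le_r.
have [eq_r|ne_r] := eqVneq r r'; first by congr pair; lia.
have Py := rim_hook_sub y_H; have [r_gt0 c_gt0] := in_diag_gt0 (rim_hook_sub x_H).
have in_H a b : r <= a <= r' -> c <= b <= c' -> (a, b) \in H.
  move=> le_a le_b; apply: (rim_hook_upper_closed x_H) => /=; try lia.
  by apply: in_diag_down_closed Py _ _ => //; lia.
by case: (no_square (r, c)); rewrite /= x_H !in_H //; lia.
Qed.

Lemma rim_hook_size a b : a \in H -> b \in H ->
  (forall z, z \in H -> content a <= content z <= content b)%R ->
  size H = `|content b - content a|%N.+1.
Proof.
move=> a_H b_H range_H; set dist := fun z => `|content z - content a|%N.
have dist_inj : {in H &, injective dist}.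
  move=> x y x_H y_H; have := range_H x x_H; have := range_H y y_H.
  by rewrite /dist => rx ry eq_d; apply: rim_hook_content_inj => //; lia.
suff /perm_size : perm_eq (map dist H) (iota 0 `|content b - content a|.+1).
  by rewrite size_map size_iota.
apply: uniq_perm; rewrite ?iota_uniq ?(map_inj_in_uniq dist_inj) ?hookH.1 // => t.
rewrite mem_iota add0n; apply/mapP/idP => [[z z_H ->]|lt_t].
  by have := range_H z z_H; have := range_H b b_H; rewrite /dist; lia.
have [p [path_p [p_H last_p]]] := hookH.2.2.2.2.1 a b a_H b_H.
have [|z z_p eq_z] := @path_content_ivt a p (content a + t%:Z)%R path_p.
  by rewrite last_p; have := range_H a a_H; lia.
exists z; last by rewrite /dist eq_z; lia.
by move: z_p; rewrite inE => /orP[/eqP ->|/(allP p_H)].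
Qed.

Lemma rim_hook_edges : exists k, vertical_edge P k /\ horizontal_edge P (k - (size H)%:Z)%R.
Proof.
have [b b_H b_max] := seq_argmax content hookH.2.1.
have [a a_H a_min] := seq_argmin content hookH.2.1.
have sizeH := rim_hook_size a_H b_H (fun z z_H => introT andP (conj (a_min z z_H) (b_max z z_H))).
have le_ab := a_min b b_H.
exists (content b); split.
  case: b b_H b_max {sizeH le_ab} => r c b_H b_max.
  have [r_gt0 c_gt0] := in_diag_gt0 (rim_hook_sub b_H).
  exists r, c; split=> //; first by right; apply: rim_hook_sub.
  apply/negP => P_right; have := b_max _ (rim_hook_upper_closed b_H P_right (leqnn _) (leqnSn _)).
  by rewrite content_succ_col gerDl.
case: a a_H a_min sizeH le_ab => r c a_H a_min -> le_ab.
have [r_gt0 c_gt0] := in_diag_gt0 (rim_hook_sub a_H).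
exists r, c; split=> //; first by right; apply: rim_hook_sub.
  apply/negP => P_below; have := a_min _ (rim_hook_upper_closed a_H P_below (leqnSn _) (leqnn _)).
  by rewrite content_succ_row lerDl.
by rewrite content_succ_row; move: le_ab; set ca := content (r, c); lia.
Qed.

End RimHookEdges.

Section Rim.
Variable lam : seq nat.
Hypothesis lam_part : is_partition lam.
Local Notation P := (in_diag lam).
Let P_down := in_diag_down_closed lam_part.

Definition rim_cell (x : cell) := P x && ~~ P (x.1.+1, x.2.+1).

Definition rim_next (x : cell) : cell := if P (x.1.+1, x.2) then (x.1.+1, x.2) else (x.1, x.2.-1).

Fixpoint rim_walk x n := if n is n'.+1 then x :: rim_walk (rim_next x) n' else [::].

Lemma size_rim_walk x n : size (rim_walk x n) = n.
Proof. by elim: n x => [|n IH] x //=; rewrite IH. Qed.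

Lemma rim_cell_content_inj x y : rim_cell x -> rim_cell y -> content x = content y -> x = y.
Proof.
case: x y => [r c] [r' c'] /andP[Px notPx] /andP[Py notPy]; rewrite /content /= => eq_xy.
have [r_gt0 c_gt0] := in_diag_gt0 Px; have [r'_gt0 c'_gt0] := in_diag_gt0 Py.
have [lt_r|lt_r'|eq_r] := ltngtP r r'; last by congr pair; lia.
  by case/negP: notPx; apply: P_down Py _ _ => /=; lia.
by case/negP: notPy; apply: P_down Px _ _ => /=; lia.
Qed.

Lemma rim_nextP x : rim_cell x -> P (x.1.+1, x.2) || (1 < x.2) ->
  [/\ rim_cell (rim_next x), content (rim_next x) = (content x - 1)%R & adj_cell x (rim_next x)].
Proof.
case: x => r c /andP[Px notPx] /= can_step; rewrite /= in notPx.
have [r_gt0 c_gt0] := in_diag_gt0 Px.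
rewrite /rim_next /=; case: ifP can_step => [Pbelow _|notPbelow /= c_gt1]; split.
- by rewrite /rim_cell /= Pbelow; apply: contra notPx => /P_down; apply; lia.
- exact: content_succ_row.
- by rewrite /adj_cell /= !eqxx orbT.
- by rewrite /rim_cell /= prednK ?notPbelow ?andbT //; apply: P_down Px _ _; lia.
- by rewrite /content /=; lia.
- by rewrite /adj_cell /= eqxx prednK ?eqxx ?orbT.
Qed.

End Rim.

Section RimHookOfEdges.
Variables (lam : seq nat) (L : nat) (s : int).
Hypotheses (lam_part : is_partition lam) (L_gt0 : 0 < L).
Hypotheses (vert_s : vertical_edge (in_diag lam) s)
  (hor_sL : horizontal_edge (in_diag lam) (s - L%:Z)%R).
Local Notation P := (in_diag lam).
Let P_down := in_diag_down_closed lam_part.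

Lemma corner_of_vertical_edge :
  exists2 x0, rim_cell lam x0 & ~~ P (x0.1, x0.2.+1) /\ content x0 = s.
Proof.
case: vert_s => r [c [r_gt0 [c0|Prc] notP eq_s]].
  subst c; case: hor_sL => r' [c' [c'_gt0 Pr'c' _ eq_sL]].
  move: eq_s eq_sL; rewrite /content /= => eq_s eq_sL.
  case: Pr'c' => [r'0|Pr'c']; first lia.
  by case/negP: notP; apply: P_down Pr'c' _ _; lia.
exists (r, c) => //; rewrite /rim_cell Prc /=.
by apply: contra notP => /P_down; apply; have := in_diag_gt0 Prc; lia.
Qed.

Lemma rim_can_step z : rim_cell lam z -> (s - L%:Z + 2 <= content z)%R ->
  P (z.1.+1, z.2) || (1 < z.2).
Proof.
case: z => r c /andP[Prc _] /=; have [r_gt0 c_gt0] := in_diag_gt0 Prc.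
have [c_gt1|c_le1] := ltnP 1 c; first by rewrite orbT.
case: hor_sL => r' [c' [c'_gt0 Pr'c' _]]; rewrite /content /= => eq_sL le_s.
case: Pr'c' => [r'0|Pr'c']; first lia.
by apply/orP; left; apply: P_down Pr'c' _ _; lia.
Qed.

Lemma rim_walk_spec n x : rim_cell lam x -> (s - L%:Z + n%:Z < content x)%R ->
  [/\ all (rim_cell lam) (rim_walk lam x n.+1),
      path adj_cell x (rim_walk lam (rim_next lam x) n)
    & map content (rim_walk lam x n.+1) = [seq (content x - k%:Z)%R | k <- iota 0 n.+1]].
Proof.
elim: n x => [|n IH] x rim_x lt_x; first by rewrite /= rim_x subr0.
have [|rim_y content_y adj_xy] := rim_nextP lam_part rim_x (rim_can_step rim_x _); first lia.
have [|all_w path_w map_w] := IH _ rim_y; first by rewrite content_y; lia.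
split; [by rewrite /= rim_x | by rewrite /= adj_xy |].
rewrite -[rim_walk _ _ _]/(x :: rim_walk lam (rim_next lam x) n.+1) -[iota 0 _]/(0 :: iota 1 n.+1).
rewrite [LHS]map_cons [RHS]map_cons map_w content_y subr0 (iotaDl 1 0) -map_comp.
by congr cons; apply: eq_map => k /=; lia.
Qed.

Lemma rim_walk_segment x0 : rim_cell lam x0 -> content x0 = s ->
  uniq (rim_walk lam x0 L) /\
  rim_walk lam x0 L =i [pred z | rim_cell lam z && (s - L%:Z < content z <= s)%R].
Proof.
move=> rim_x0 eq_s; rewrite -(prednK L_gt0).
have [|all_w _ map_w] := rim_walk_spec (n := L.-1) rim_x0; first by rewrite eq_s; lia.
split.
  rewrite -(map_inj_in_uniq (f := content)) ?map_w ?map_inj_uniq ?iota_uniq //.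
    by move=> k k' /= eq_k; lia.
  move=> z z' /(allP all_w) rim_z /(allP all_w) rim_z'.
  by have := rim_cell_content_inj lam_part rim_z rim_z'.
move=> z; rewrite inE; apply/idP/andP => [z_w|[rim_z range_z]].
  split; first exact: (allP all_w).
  have : content z \in map content (rim_walk lam x0 L.-1.+1) by apply: map_f.
  by rewrite map_w eq_s => /mapP[k]; rewrite mem_iota => k_lt ->; lia.
have : content z \in map content (rim_walk lam x0 L.-1.+1).
  by rewrite map_w eq_s; apply/mapP; exists `|s - content z|%N; rewrite ?mem_iota; lia.
case/mapP=> z' z'_w eq_z.
by rewrite (rim_cell_content_inj lam_part rim_z (allP all_w _ z'_w) eq_z).
Qed.

Lemma rim_segment_complement_young x0 : rim_cell lam x0 -> ~~ P (x0.1, x0.2.+1) -> content x0 = s ->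
  young (fun y => P y && ~~ (rim_cell lam y && (s - L%:Z < content y <= s)%R)).
Proof.
move=> rim_x0 notP_x0 eq_s; apply: (@young_of_down_closed _ (diag_bound lam)).
- by move=> r c /andP[/in_diag_gt0].
- apply: down_closed_step => r c /andP[Py notS] pos.
    have [_ c_gt0] := in_diag_gt0 Py.
    have -> /= : P (r, c) by apply: P_down Py _ _; lia.
    apply: contra notS => /andP[/andP[_ /= notP11] /andP[lo hi]].
    have notP21 : ~~ P (r.+2, c.+1) by apply: contra notP11 => /P_down; apply; lia.
    rewrite /rim_cell Py notP21 content_succ_row /=.
    have [_|le] := ltrP (s - L%:Z)%R (content (r, c) - 1)%R; first by rewrite /=; lia.
    exfalso; apply: (edge_labels_disjoint P_down _ hor_sL).
    by exists r.+1, c; split; rewrite ?content_succ_row //; [right|lia].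
  have [r_gt0 _] := in_diag_gt0 Py.
  have Prc : P (r, c) by apply: P_down Py _ _; lia.
  rewrite Prc /=; apply: contra notS => /andP[/andP[_ /= notP11] /andP[lo hi]].
  have notP12 : ~~ P (r.+1, c.+2) by apply: contra notP11 => /P_down; apply; lia.
  rewrite /rim_cell Py notP12 content_succ_col /=.
  have [_|lt] := lerP (content (r, c) + 1)%R s; first by rewrite andbT; lia.
  have rim_rc : rim_cell lam (r, c) by rewrite /rim_cell /= Prc notP11.
  have eq_x0 : (r, c) = x0 by have := rim_cell_content_inj lam_part rim_rc rim_x0; apply; lia.
  by move: notP_x0; rewrite -eq_x0 /= Py.
- by move=> r c /andP[/(in_diag_bounded lam_part)].
Qed.

Lemma rim_hook_of_edges : exists H, size H = L /\ rim_hook lam H.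
Proof.
have [x0 rim_x0 [notP_x0 eq_s]] := corner_of_vertical_edge.
have [uniq_w mem_w] := rim_walk_segment rim_x0 eq_s.
have [|_ path_w _] := rim_walk_spec (n := L.-1) rim_x0; first by rewrite eq_s; lia.
exists (rim_walk lam x0 L); split; first exact: size_rim_walk.
split=> //; split; first by rewrite -size_eq0 size_rim_walk -lt0n.
split; first by apply/allP => z; rewrite mem_w => /andP[/andP[]].
split.
  have [mu [mu_part defmu]] := rim_segment_complement_young rim_x0 notP_x0 eq_s.
  by exists mu; split=> // y; rewrite mem_w.
split; first by rewrite -(prednK L_gt0); apply: path_cells_connected.
move=> [r c] /=; rewrite !mem_w !inE /= /rim_cell /=.
by case: (P (r.+1, c.+1)); rewrite !andbF.
Qed.

End RimHookOfEdges.

Theorem proposition4p11 (l : nat) (hl : (1 < l)%N) :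
  (* T_i is well defined on partitions *)
  (forall (mu : seq nat) (i : nat), is_partition mu -> (i < l)%N ->
     exists nu, T_spec l i mu nu) /\
  (* d(sigma_i * mu) = sigma_i * d(mu) *)
  (forall (mu nu : seq nat) (i : nat), is_partition mu -> (i < l)%N ->
     T_spec l i mu nu ->
     forall j, (j < l)%N -> dvec l nu j = sigma_act l i (dvec l mu) j) /\
  (* restriction to l-cores: sigma_i maps cores to cores, equivariantly *)
  (forall (nu nu' : seq nat) (i : nat), is_partition nu -> is_core l nu ->
     (i < l)%N -> T_spec l i nu nu' ->
     is_core l nu' /\
     forall j, (j < l)%N -> dvec l nu' j = sigma_act l i (dvec l nu) j).
Proof.
split; [|split].
- by move=> mu i mu_part _; apply: T_spec_exists.
- by move=> mu nu i mu_part lt_il T_nu; apply: dvec_T_spec.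
- move=> nu nu' i nu_part nu_core lt_il T_nu; split; last exact: dvec_T_spec.
  case=> H [sizeH hookH]; have nu'_part : is_partition nu' by case: T_nu.
  have [k [vert hor]] := rim_hook_edges nu'_part hookH.
  have vert' := vertical_edge_T hl nu_part T_nu vert.
  have := horizontal_edge_T hl nu_part T_nu hor; rewrite sizeH swap_labelBl => hor'.
  exact/nu_core/(rim_hook_of_edges nu_part (ltnW hl) vert' hor').
Qed.
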